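(* Let $\Sigma$ be a finite alphabet with at least two symbols and $z\in\{B,A\}$. The set of isolated points of $(\Sigma^{\mathbb{N}},\tau_z)$ is exactly the set $\mathrm{Ult}$ of ultimately periodic words, and $\mathrm{Ult}$ is dense in $(\Sigma^{\mathbb{N}},\tau_z)$; consequently a subset of $(\Sigma^{\mathbb{N}},\tau_z)$ is dense if and only if it contains $\mathrm{Ult}$.
   Context: $\mathrm{Ult}=\{u\cdot v^\omega: u,v\in\Sigma^*, v\neq\emptyset\}$, the ultimately periodic infinite words. A language $L\subseteq\Sigma^{\mathbb{N}}$ is $\omega$-regular if accepted by a Büchi automaton $(\Sigma,Q,Q_i,Q_f,\delta)$ (a run on $\sigma$ is $(q_n)_n$ with $q_0\in Q_i$, $(q_n,\sigma(n),q_{n+1})\in\delta$; accepting iff $q_n\in Q_f$ for infinitely many $n$). $\tau_C$ is the Cantor topology on $\Sigma^{\mathbb{N}}$; $\tau_B$ is generated by the $\omega$-regular languages; $\tau_A$ is generated by the $\tau_C$-closed $\omega$-regular languages. A point $x$ is isolated if $\{x\}$ is open. *)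

From mathcomp Require Import all_boot.
Set Implicit Arguments. Unset Strict Implicit. Unset Printing Implicit Defensive.

Definition word (S : finType) := nat -> S.
Definition lang (S : finType) := word S -> Prop.

(* Ult = { u v^omega : u, v finite words, v nonempty } *)
Definition Ult (S : finType) : lang S := fun x =>
  exists (u v : seq S), v <> [::] /\
    forall n, x n = if n < size u then nth (x n) u n
                    else nth (x n) v ((n - size u) %% size v).

Record buchi (S : finType) := Buchi {
  bstate : finType;
  binit : {set bstate};
  bfinal : {set bstate};
  bdelta : bstate -> S -> bstate -> bool }.

Definition buchi_run (S : finType) (B : buchi S) (s : word S) (r : nat -> bstate B) :=
  r 0 \in @binit S B /\ forall n, @bdelta S B (r n) (s n) (r n.+1).

Definition buchi_accepts (S : finType) (B : buchi S) (s : word S) :=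
  exists r : nat -> bstate B, @buchi_run S B s r /\ forall N, exists2 n, N <= n & r n \in @bfinal S B.

Definition omega_regular (S : finType) (L : lang S) :=
  exists B : buchi S, forall s, L s <-> buchi_accepts B s.

Definition cantor_open (S : finType) (U : lang S) :=
  forall x, U x -> exists N, forall y, (forall i, i < N -> y i = x i) -> U y.
Definition cantor_closed (S : finType) (L : lang S) :=
  cantor_open (fun x => ~ L x).

Inductive gen_open (S : finType) (G : lang S -> Prop) : lang S -> Prop :=
  | go_gen U : G U -> gen_open G U
  | go_full : gen_open G (fun _ => True)
  | go_inter U V : gen_open G U -> gen_open G V ->
                   gen_open G (fun x => U x /\ V x)
  | go_union (I : Type) (F : I -> lang S) :
      (forall i, gen_open G (F i)) -> gen_open G (fun x => exists i, F i x)
  | go_ext U V : (forall x, U x <-> V x) -> gen_open G U -> gen_open G V.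

Inductive topz := zB | zA.

Definition generators (S : finType) (z : topz) : lang S -> Prop :=
  match z with
  | zB => fun L => omega_regular L
  | zA => fun L => omega_regular L /\ cantor_closed L
  end.

Definition tau_open (S : finType) (z : topz) (U : lang S) := gen_open (generators z) U.

Definition isolated (S : finType) (z : topz) (x : word S) :=
  tau_open z (fun y => y = x).

Definition dense (S : finType) (z : topz) (D : lang S) :=
  forall U, tau_open z U -> (exists x, U x) -> exists x, U x /\ D x.

From mathcomp Require Import all_boot zify.
From Stdlib Require Import Classical ClassicalEpsilon FunctionalExtensionality.
Set Implicit Arguments. Unset Strict Implicit. Unset Printing Implicit Defensive.

(* Every tau_z-open set [U] is "pumpable": a point [x] of [U] comes with a
   finite colouring of its positions such that [U] contains every lasso
   [x_0 ... x_(m-1) (x_m ... x_(n-1))^omega] with [m], [n] of the same colour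
   and far enough apart.  For an omega-regular set the colour is the state of
   an accepting Buchi run, which may loop back from [n] to [m] after having
   visited a final state in between; pumpability is preserved by the
   operations generating the topology.  By the pigeonhole principle every
   nonempty open set therefore contains an ultimately periodic word, so [Ult]
   is dense.  Conversely an ultimately periodic word is recognised by a
   deterministic Buchi automaton whose states are the positions of its lasso,
   and a singleton is Cantor-closed, so every word of [Ult] is isolated.  A
   dense set contains every isolated point, which gives the remaining
   inclusions. *)

Lemma modnS_ifltn a d : 0 < d ->
  a.+1 %% d = if (a %% d).+1 < d then (a %% d).+1 else 0.
Proof.
move=> d0; have hr := ltn_pmod a d0.
have -> : a.+1 = a %/ d * d + (a %% d).+1 by rewrite addnS -divn_eq.
rewrite modnMDl; case: ifP => hlt; first by rewrite modn_small.
have -> : (a %% d).+1 = d by lia.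
by rewrite modnn.
Qed.

Definition lasso_pos m n k := if k < m then k else m + (k - m) %% (n - m).

Definition lasso (S : finType) (x : word S) m n : word S := fun k => x (lasso_pos m n k).

Lemma lasso_pos0 m n : lasso_pos m n 0 = 0.
Proof. by rewrite /lasso_pos; case: ifP => // h; rewrite sub0n mod0n; lia. Qed.

Lemma lasso_pos_lt m n k : m < n -> lasso_pos m n k < n.
Proof.
move=> mn; rewrite /lasso_pos; case: ifP => hk; first lia.
have := @ltn_pmod (k - m) (n - m); lia.
Qed.

Definition lasso_next m n k := if k.+1 < n then k.+1 else m.

Lemma lasso_posS m n k : m < n ->
  lasso_pos m n k.+1 = lasso_next m n (lasso_pos m n k).
Proof.
move=> mn; rewrite /lasso_next /lasso_pos; case: (ltnP k m) => hk.
  case: ifP => hkm; first by rewrite ifT; lia.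
  have -> : k.+1 - m = 0 by lia.
  by rewrite mod0n addn0 ifT; lia.
have p0 : 0 < n - m by lia.
have := ltn_pmod (k - m) p0.
have -> : k.+1 - m = (k - m).+1 by lia.
rewrite ifF ?(modnS_ifltn _ p0); last lia.
by case: ifP => h1; case: ifP => h2; lia.
Qed.

Lemma lasso_pos_recurrent m n h : m <= h < n ->
  forall N, exists2 k, N <= k & lasso_pos m n k = h.
Proof.
move=> /andP [mh hn] N; have p0 : 0 < n - m by lia.
exists (m + N * (n - m) + (h - m)); first by have := leq_pmulr N p0; lia.
rewrite /lasso_pos ifF; last by set t := N * (n - m); lia.
have -> : m + N * (n - m) + (h - m) - m = N * (n - m) + (h - m) by lia.
by rewrite modnMDl modn_small; lia.
Qed.

Lemma lasso_Ult (S : finType) (x : word S) m n : m < n -> Ult (lasso x m n).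
Proof.
move=> mn; exists [seq x i | i <- iota 0 m], [seq x i | i <- iota m (n - m)].
have p0 : 0 < n - m by lia.
split; first by case: (n - m) p0.
move=> k; rewrite !size_map !size_iota /lasso /lasso_pos.
case: ifP => hk; first by rewrite (nth_map 0) ?size_iota // nth_iota.
by rewrite (nth_map 0) ?size_iota ?ltn_pmod // nth_iota ?ltn_pmod.
Qed.

Lemma Ult_eq_lasso (S : finType) (x : word S) :
  Ult x -> exists m n, m < n /\ x =1 lasso x m n.
Proof.
move=> [u [v [hv hx]]]; have p0 : 0 < size v by case: v hv {hx}.
exists (size u), (size u + size v); split => [|k]; first lia.
rewrite /lasso /lasso_pos; case: ifP => // hk.
rewrite addKn (hx (size u + _)) ifN; last lia.
rewrite hx hk addKn (modn_small (ltn_pmod _ p0)).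
by apply: set_nth_default; rewrite ltn_pmod.
Qed.

Lemma buchi_run_lasso (S : finType) (B : buchi S) (x : word S)
    (r : nat -> bstate B) m n :
  m < n -> buchi_run x r -> r m = r n ->
  buchi_run (lasso x m n) (fun k => r (lasso_pos m n k)).
Proof.
move=> mn [r0 rx] rmn; split; first by rewrite lasso_pos0.
move=> k; rewrite /lasso lasso_posS // /lasso_next; case: ifP => [_ | hge].
  exact: rx.
have wrap : (lasso_pos m n k).+1 = n by have := lasso_pos_lt k mn; lia.
by rewrite -wrap in rmn; rewrite rmn; apply: rx.
Qed.

Definition pumpable (S : finType) (U : lang S) := forall x, U x ->
  exists (Q : finType) (c : nat -> Q) (g : nat -> nat),
    forall m n, m < n -> c m = c n -> g m <= n -> U (lasso x m n).

Lemma omega_regular_pumpable (S : finType) (U : lang S) :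
  omega_regular U -> pumpable U.
Proof.
move=> [B hB] x /hB [r [run fin]].
have fin' m : exists h, (m <= h) && (r h \in bfinal B).
  by have [h mh fh] := fin m; exists h; rewrite mh fh.
exists (bstate B), r, (fun m => (xchoose (fin' m)).+1) => m n mn rmn hn.
have /andP [mh fh] := xchooseP (fin' m); set h := xchoose (fin' m) in mh fh hn.
apply/hB; exists (fun k => r (lasso_pos m n k)); split; first exact: buchi_run_lasso.
have mhn : m <= h < n by rewrite mh.
by move=> N; have [k Nk hk] := lasso_pos_recurrent mhn N; exists k; rewrite ?hk.
Qed.

Lemma tau_open_pumpable (S : finType) z (U : lang S) : tau_open z U -> pumpable U.
Proof.
elim => {U}.
- move=> U hU; apply: omega_regular_pumpable; by case: z hU => // [[]].
- by move=> x _; exists unit, (fun _ => tt), (fun _ => 0).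
- move=> U V _ hU _ hV x [/hU [Q1 [c1 [g1 H1]]] /hV [Q2 [c2 [g2 H2]]]].
  exists (Q1 * Q2)%type, (fun k => (c1 k, c2 k)), (fun k => maxn (g1 k) (g2 k)).
  move=> m n mn [e1 e2]; rewrite geq_max => /andP [l1 l2].
  by split; [apply: H1 | apply: H2].
- move=> I F _ IH x [i /IH [Q [c [g H]]]].
  by exists Q, c, g => m n mn e l; exists i; apply: H.
- move=> U V hUV _ IH x /hUV /IH [Q [c [g H]]].
  by exists Q, c, g => m n mn e l; apply/hUV; apply: H.
Qed.

Lemma recurrent_value (Q : finType) (c : nat -> Q) :
  exists q, forall N, exists2 n, N <= n & c n = q.
Proof.
apply: NNPP => Hno.
have bounded q : exists N, forall n, N <= n -> c n <> q.
  apply: NNPP => Hq; apply: Hno; exists q => N; apply: NNPP => HN.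
  by apply: Hq; exists N => n Nn cnq; apply: HN; exists n.
pose f q := proj1_sig (constructive_indefinite_description _ (bounded q)).
have hf q : forall n, f q <= n -> c n <> q.
  exact: proj2_sig (constructive_indefinite_description _ (bounded q)).
pose M := \max_q f q.
exact: (hf (c M) M (leq_bigmax _) erefl).
Qed.

Lemma dense_Ult (S : finType) z : dense z (@Ult S).
Proof.
move=> U hU [x Ux]; have [Q [c [g H]]] := tau_open_pumpable hU Ux.
have [q hq] := recurrent_value c.
have [m _ cm] := hq 0.
have [n] := hq (maxn (g m) m.+1); rewrite geq_max => /andP [gmn mn] cn.
exists (lasso x m n); split; first by apply: H => //; rewrite cm cn.
exact: lasso_Ult.
Qed.

Lemma omega_regular_lasso_singleton (S : finType) (x : word S) m n :
  m < n -> x =1 lasso x m n -> omega_regular (fun y => y = x).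
Proof.
move=> mn xl.
pose B := @Buchi S 'I_n [set k : 'I_n | val k == 0] setT
  (fun k a k' => (a == x k) && (val k' == lasso_next m n k)).
exists B => y; split.
- move=> ->; exists (fun k => Ordinal (lasso_pos_lt k mn)); split; first split.
  + by rewrite inE /= lasso_pos0.
  + by move=> k /=; rewrite {1}xl lasso_posS // !eqxx.
  + by move=> N; exists N; rewrite ?inE.
- move=> [r [[r0 rd] _]].
  have rpos k : val (r k) = lasso_pos m n k.
    elim: k => [|k IH]; first by move: r0; rewrite inE lasso_pos0 => /eqP.
    by have /andP [_ /eqP ->] := rd k; rewrite lasso_posS // IH.
  apply: functional_extensionality => k.
  have /andP [/eqP -> _] := rd k; rewrite rpos; exact: esym (xl k).
Qed.

Lemma cantor_closed_singleton (S : finType) (x : word S) :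
  cantor_closed (fun y => y = x).
Proof.
move=> y neq_yx.
have [i neq_i] : exists i, y i <> x i.
  apply: NNPP => Hall; apply: neq_yx; apply: functional_extensionality => i.
  by apply: NNPP => Hi; apply: Hall; exists i.
by exists i.+1 => y' agree eq_y'x; apply: neq_i; rewrite -(agree i) // eq_y'x.
Qed.

Lemma Ult_isolated (S : finType) z (x : word S) : Ult x -> isolated z x.
Proof.
move=> /Ult_eq_lasso [m [n [mn xl]]]; apply: go_gen.
have reg := omega_regular_lasso_singleton mn xl.
by case: z => //=; split => //; apply: cantor_closed_singleton.
Qed.

Lemma dense_isolated (S : finType) z (D : lang S) x :
  dense z D -> isolated z x -> D x.
Proof. by move=> dD isx; have [y [-> Dx]] := dD _ isx (ex_intro _ x erefl). Qed.

Lemma dense_sub (S : finType) z (D E : lang S) :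
  dense z D -> (forall x, D x -> E x) -> dense z E.
Proof.
move=> dD DE U oU neU; have [x [Ux Dx]] := dD U oU neU.
by exists x; split => //; apply: DE.
Qed.

Theorem mainTheorem14 (S : finType) (z : topz) (hS : 1 < #|S|) :
  (forall x : word S, isolated z x <-> Ult x) /\
  dense z (@Ult S) /\
  (forall D : lang S, dense z D <-> (forall x, Ult x -> D x)).
Proof.
have dUlt := @dense_Ult S z.
split; [|split => // D; split].
- by move=> x; split; [apply: dense_isolated | apply: Ult_isolated].
- by move=> dD x /(Ult_isolated z); apply: dense_isolated.
- exact: dense_sub.
Qed.
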